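(* For every integer $m \geq 1$, the clique number of the graph $\mathrm{Cay}(\tau_m)$ is at least $2^m$.
   Context: Identify $\mathbb{Z}_2^{2m}$ with the integers $0,\dots,4^m-1$ via binary representation, so each $i \in \mathbb{Z}_2^{2m}$ has a base-4 representation with $m$ digits (each base-4 digit being a consecutive pair of bits). Define $\tau_m:\mathbb{Z}_2^{2m}\to\mathbb{Z}_2$ by $\tau_m(i)=1$ if and only if the number of base-4 digits of $i$ equal to $1$ or $2$ is nonzero and the number of base-4 digits of $i$ equal to $1$ is even. The Cayley graph $\mathrm{Cay}(\tau_m)$ is the simple undirected graph with vertex set $\mathbb{Z}_2^{2m}$ in which distinct $i,j$ are adjacent if and only if $\tau_m(i+j)=1$. *)

From mathcomp Require Import all_boot.
From Stdlib Require PeanoNat.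
Set Implicit Arguments. Unset Strict Implicit. Unset Printing Implicit Defensive.

(* Z_2^{2m} is identified with the integers 0..4^m-1 ('I_(4^m)); the group
   addition of Z_2^{2m} is bitwise XOR of binary representations. *)
Definition vadd (a b : nat) : nat := PeanoNat.Nat.lxor a b.

Definition digit4 (i k : nat) : nat := (i %/ 4 ^ k) %% 4.

Definition digits4 (m i : nat) : seq nat := [seq digit4 i k | k <- iota 0 m].

Definition tau (m i : nat) : bool :=
  (count (fun d => (d == 1) || (d == 2)) (digits4 m i) != 0)
  && ~~ odd (count (pred1 1) (digits4 m i)).

Definition cay_adj (m : nat) (i j : 'I_(4 ^ m)) : bool :=
  (i != j) && tau m (vadd i j).

Definition is_clique (m : nat) (S : {set 'I_(4 ^ m)}) : bool :=
  [forall i in S, forall j in S, (i != j) ==> cay_adj i j].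

Definition clique_number (m : nat) : nat :=
  \max_(S : {set 'I_(4 ^ m)} | is_clique S) #|S|.

(* Spread the bits of x < 2^m into the base-4 digits 0 and 2.  The images form
   a subgroup of Z_2^{2m} of size 2^m with no digit 1, and tau is 1 on each of
   its nonzero elements: the digit-1 count is 0 (even) and a nonzero element
   has a digit 2.  Hence any two distinct images are adjacent. *)
From Stdlib Require Import PeanoNat Lia.
From mathcomp Require Import all_boot zify.

Lemma lxor_lt2 {u v : nat} : u < 2 -> v < 2 -> Nat.lxor u v < 2.
Proof. by case: u => [|[|]] //; case: v => [|[|]]. Qed.

Lemma testbit0_add_double (u a : nat) : u < 2 -> Nat.testbit (u + 2 * a) 0 = (u == 1).
Proof.
rewrite Nat.bit0_odd; case: u => [|[|u]] // _.
- by rewrite add0n Nat.odd_mul.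
- by rewrite add1n Nat.odd_succ Nat.even_mul.
Qed.

Lemma testbitS_add_double (u a n : nat) : u < 2 ->
  Nat.testbit (u + 2 * a) n.+1 = Nat.testbit a n.
Proof.
rewrite -Nat.testbit_div2; case: u => [|[|u]] // _.
- by rewrite add0n Nat.div2_double.
- by rewrite add1n Nat.div2_succ_double.
Qed.

Lemma lxor_add_double (u v a b : nat) : u < 2 -> v < 2 ->
  Nat.lxor (u + 2 * a) (v + 2 * b) = Nat.lxor u v + 2 * Nat.lxor a b.
Proof.
move=> u_lt2 v_lt2; have uv_lt2 := lxor_lt2 u_lt2 v_lt2.
apply: Nat.bits_inj => -[|n]; rewrite Nat.lxor_spec.
- rewrite !testbit0_add_double //.
  by case: u u_lt2 {uv_lt2} => [|[|]] //; case: v v_lt2 => [|[|]].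
- by rewrite !testbitS_add_double // Nat.lxor_spec.
Qed.

Lemma lxor_modn_divn2 (x y : nat) :
  Nat.lxor x y = Nat.lxor (x %% 2) (y %% 2) + 2 * Nat.lxor (x %/ 2) (y %/ 2).
Proof. by rewrite -lxor_add_double ?ltn_pmod //; congr Nat.lxor; lia. Qed.

Lemma lxor_ltn_exp2 (n x y : nat) : x < 2 ^ n -> y < 2 ^ n -> Nat.lxor x y < 2 ^ n.
Proof.
elim: n x y => [|n IHn] x y; first by rewrite expn0; case: x; case: y.
rewrite expnS lxor_modn_divn2 => x_lt y_lt.
have x2 := ltn_pmod x (isT : 0 < 2); have y2 := ltn_pmod y (isT : 0 < 2).
rewrite (divn_eq x 2) (divn_eq y 2) in x_lt y_lt.
have := IHn (x %/ 2) (y %/ 2); have := lxor_lt2 x2 y2; lia.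
Qed.

Lemma digits4S (n i : nat) : digits4 n.+1 i = (i %% 4) :: digits4 n (i %/ 4).
Proof.
rewrite /digits4 /= /digit4 expn0 divn1; congr (_ :: _).
rewrite -(addn0 1) iotaDl -map_comp; apply: eq_map => k /=.
by rewrite add1n expnS divnMA.
Qed.

Fixpoint spread (n x : nat) : nat :=
  if n is n'.+1 then 2 * (x %% 2) + 4 * spread n' (x %/ 2) else 0.

Lemma spread_mod4 (n x : nat) : spread n.+1 x %% 4 = 2 * (x %% 2).
Proof. by rewrite /=; have := ltn_pmod x (isT : 0 < 2); lia. Qed.

Lemma spread_div4 (n x : nat) : spread n.+1 x %/ 4 = spread n (x %/ 2).
Proof. by rewrite /=; have := ltn_pmod x (isT : 0 < 2); lia. Qed.

Lemma spread_lt (n x : nat) : spread n x < 4 ^ n.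
Proof.
elim: n x => [|n IHn] x //=; rewrite expnS.
have := IHn (x %/ 2); have := ltn_pmod x (isT : 0 < 2); lia.
Qed.

Lemma spread_inj (n x y : nat) :
  x < 2 ^ n -> y < 2 ^ n -> spread n x = spread n y -> x = y.
Proof.
elim: n x y => [|n IHn] x y /=; first by rewrite expn0; case: x; case: y.
rewrite expnS => x_lt y_lt eq_spread.
have x2 := ltn_pmod x (isT : 0 < 2); have y2 := ltn_pmod y (isT : 0 < 2).
have eq_mod : x %% 2 = y %% 2 by lia.
have eq_div : x %/ 2 = y %/ 2.
  by apply: IHn; rewrite (divn_eq x 2) (divn_eq y 2) in x_lt y_lt; lia.
by rewrite (divn_eq x 2) (divn_eq y 2) eq_mod eq_div.
Qed.

Lemma spread_lxor (n x y : nat) :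
  Nat.lxor (spread n x) (spread n y) = spread n (Nat.lxor x y).
Proof.
elim: n x y => [|n IHn] x y /=; first by rewrite Nat.lxor_0_r.
have x2 := ltn_pmod x (isT : 0 < 2); have y2 := ltn_pmod y (isT : 0 < 2).
have shift p a : 2 * p + 4 * a = 0 + 2 * (p + 2 * a) by lia.
rewrite !shift !lxor_add_double // IHn [Nat.lxor x y]lxor_modn_divn2.
have := lxor_lt2 x2 y2.
set s := Nat.lxor (x %% 2) (y %% 2); set t := Nat.lxor (x %/ 2) (y %/ 2) => s_lt2.
have -> : (s + 2 * t) %% 2 = s by lia.
by have -> : (s + 2 * t) %/ 2 = t by lia.
Qed.

Lemma count_digit1_spread (n x : nat) : count (pred1 1) (digits4 n (spread n x)) = 0.
Proof.
elim: n x => [|n IHn] x //; rewrite digits4S spread_mod4 spread_div4 /= IHn addn0.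
by case: (x %% 2) => [|[|]].
Qed.

Lemma count_digit12_spread (n x : nat) : x < 2 ^ n -> x != 0 ->
  count (fun d => (d == 1) || (d == 2)) (digits4 n (spread n x)) != 0.
Proof.
elim: n x => [|n IHn] x; first by rewrite expn0; case: x.
rewrite expnS digits4S spread_mod4 spread_div4 /= => x_lt x_neq0.
have x2 := ltn_pmod x (isT : 0 < 2).
case x_mod: (x %% 2) => [|[|]] //; last by lia.
by rewrite add0n; apply: IHn; rewrite (divn_eq x 2) x_mod in x_lt x_neq0; lia.
Qed.

Lemma tau_spread (n x : nat) : x < 2 ^ n -> x != 0 -> tau n (spread n x).
Proof.
by move=> x_lt x_neq0; rewrite /tau count_digit1_spread count_digit12_spread.
Qed.

Definition spread_ord (m : nat) (x : 'I_(2 ^ m)) : 'I_(4 ^ m) :=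
  Ordinal (spread_lt m x).

Lemma spread_ord_inj (m : nat) : injective (@spread_ord m).
Proof.
move=> x y /(congr1 val) /=; move/(@spread_inj m x y (ltn_ord x) (ltn_ord y)).
exact: val_inj.
Qed.

Lemma is_clique_spread (m : nat) : is_clique (@spread_ord m @: [set: 'I_(2 ^ m)]).
Proof.
apply/forallP => i; apply/implyP => /imsetP [x _ ->].
apply/forallP => j; apply/implyP => /imsetP [y _ ->].
apply/implyP => spread_neq; rewrite /cay_adj spread_neq /vadd /= spread_lxor.
apply: tau_spread; first exact: lxor_ltn_exp2.
apply: contraNneq spread_neq => /Nat.lxor_eq x_eq_y.
by rewrite (val_inj x_eq_y).
Qed.

Theorem lemma4 (m : nat) (hm : 1 <= m) : 2 ^ m <= clique_number m.
Proof.
apply: leq_trans (leq_bigmax_cond _ (is_clique_spread m)).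
by rewrite card_imset ?cardsT ?card_ord //; apply: spread_ord_inj.
Qed.
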